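(* Let $(R,\mathfrak m,k)$ be a complete Noetherian local ring, $E=E_R(k)$, $L$ an $R$-module, and $S\subseteq L$ a subset. Then $\operatorname{tr}_{S,L}(R)=\operatorname{ann}_R\big(0_E^{\mathrm{cl}_{S,L}}\big)$.
   Context: For an $R$-module $N$, $\operatorname{tr}_{S,L}(N)$ is the submodule of $N$ generated by $\{f(s): f\in\operatorname{Hom}_R(L,N),\ s\in S\}$. For $R$-modules $N\subseteq M$, $N^{\mathrm{cl}_{S,L}}_M=\{u\in M: s\otimes u\in\operatorname{im}(L\otimes_R N\to L\otimes_R M)\text{ for all }s\in S\}$; in particular $0^{\mathrm{cl}_{S,L}}_E=\{u\in E: s\otimes u=0\text{ in }L\otimes_R E\text{ for all } s\in S\}$. *)

From HB Require Import structures.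
From mathcomp Require Import all_boot all_order all_algebra.
Set Implicit Arguments. Unset Strict Implicit. Unset Printing Implicit Defensive.
Import GRing.Theory.
Local Open Scope ring_scope.

Section CommAlg.
Variable R : comUnitRingType.

Definition is_ideal (I : R -> Prop) : Prop :=
  I 0 /\ (forall x y, I x -> I y -> I (x + y)) /\ (forall r x, I x -> I (r * x)).

Definition noetherian : Prop :=
  forall I : R -> Prop, is_ideal I ->
    exists s : seq R, forall x, I x <->
      exists c : 'I_(size s) -> R, x = \sum_(i < size s) c i * s`_i.

(** The non-units; R is local iff they are closed under addition
    (then they form the unique maximal ideal m). *)
Definition mx (x : R) : Prop := x \isn't a GRing.unit.
Definition local_ring : Prop := forall x y, mx x -> mx y -> mx (x + y).

Fixpoint mpow (n : nat) : R -> Prop :=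
  match n with
  | 0 => fun _ => True
  | n'.+1 => fun x => exists (k : nat) (a b : 'I_k -> R),
       (forall i, mx (a i)) /\ (forall i, mpow n' (b i)) /\ x = \sum_(i < k) a i * b i
  end.

Definition madic_complete : Prop :=
  forall x : nat -> R,
    (forall n, exists N, forall i j, (N <= i)%N -> (N <= j)%N -> mpow n (x i - x j)) ->
    exists y, forall n, exists N, forall i, (N <= i)%N -> mpow n (x i - y).

Definition is_submodule (M : lmodType R) (P : M -> Prop) : Prop :=
  P 0 /\ (forall r u v, P u -> P v -> P (r *: u + v)).

Definition injective_module (E : lmodType R) : Prop :=
  forall (A B : lmodType R) (i : {linear A -> B}) (f : {linear A -> E}),
    injective i -> exists g : {linear B -> E}, forall a, g (i a) = f a.

(** [e0] generates a copy of the residue field k = R/m inside E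
    (k -> E, 1 + m |-> e0, is an injective R-linear map), and E is an
    essential extension of that copy, and E is injective:
    i.e. E is an injective hull E_R(k) of k. *)
Definition injective_hull_of_residue (E : lmodType R) (e0 : E) : Prop :=
  [/\ e0 != 0,
      forall a, mx a -> a *: e0 = 0,
      forall P : E -> Prop, is_submodule P -> (exists u, P u /\ u <> 0) ->
        exists v, [/\ P v, v <> 0 & exists t, v = t *: e0]
    & injective_module E].

Definition bilinear_map (L N M : lmodType R) (b : L -> N -> M) : Prop :=
  (forall r l1 l2 n, b (r *: l1 + l2) n = r *: b l1 n + b l2 n) /\
  (forall r l n1 n2, b l (r *: n1 + n2) = r *: b l n1 + b l n2).

(** [s (x) u = 0] in [L (x)_R N]: by the universal property of the tensor
    product, the pure tensor vanishes iff every R-bilinear map kills (s,u). *)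
Definition tensor_zero (L N : lmodType R) (s : L) (u : N) : Prop :=
  forall (M : lmodType R) (b : L -> N -> M), bilinear_map b -> b s u = 0.

Definition trace_SL (L : lmodType R) (S : L -> Prop) (x : R) : Prop :=
  exists (k : nat) (r : 'I_k -> R) (f : 'I_k -> {linear L -> R^o}) (s : 'I_k -> L),
    (forall i, S (s i)) /\ x = \sum_(i < k) r i * (f i (s i) : R).

Definition zero_cl (L : lmodType R) (S : L -> Prop) (N : lmodType R) (u : N) : Prop :=
  forall s, S s -> tensor_zero s u.

Definition annihilator (M : lmodType R) (P : M -> Prop) (r : R) : Prop :=
  forall u, P u -> r *: u = 0.

End CommAlg.

(* One inclusion is formal: a linear form f : L -> R gives the bilinear map
   (l, v) |-> f(l) v, so f(s) kills every u with s (x) u = 0.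
   Conversely, if x is not in the trace, Krull's intersection theorem gives n
   with x outside tr + m^n, and injectivity of E gives u in E killed by
   tr + m^n with x u = e0 <> 0.  This u lies in 0^cl: were b(s, u) <> 0 for a
   bilinear b, a map pi into E with pi (b(s, u)) = e0 would make each
   v |-> pi (b(l, v)) an endomorphism of E, hence (R being complete) a scalar
   g(l) on the m-power torsion; g is then a linear form, so g(s) is in the
   trace and pi (b(s, u)) = g(s) u = 0. *)

From HB Require Import structures.
From mathcomp Require Import all_boot all_order all_algebra.
From mathcomp Require Import boolp ring.
Set Implicit Arguments. Unset Strict Implicit. Unset Printing Implicit Defensive.
Import GRing.Theory.
Local Open Scope ring_scope.

Definition catf (T : Type) k1 k2 (f1 : 'I_k1 -> T) (f2 : 'I_k2 -> T) (i : 'I_(k1 + k2)) : T :=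
  match split i with inl j => f1 j | inr j => f2 j end.

Lemma catfP (T : Type) k1 k2 (f1 : 'I_k1 -> T) (f2 : 'I_k2 -> T) (P : T -> Prop) :
  (forall i, P (f1 i)) -> (forall i, P (f2 i)) -> forall i, P (catf f1 f2 i).
Proof. by move=> h1 h2 i; rewrite /catf; case: (split i). Qed.

Lemma catf_lshift (T : Type) k1 k2 (f1 : 'I_k1 -> T) (f2 : 'I_k2 -> T) i :
  catf f1 f2 (lshift k2 i) = f1 i.
Proof. by rewrite /catf (unsplitK (inl i)). Qed.

Lemma catf_rshift (T : Type) k1 k2 (f1 : 'I_k1 -> T) (f2 : 'I_k2 -> T) i :
  catf f1 f2 (rshift k1 i) = f2 i.
Proof. by rewrite /catf (unsplitK (inr i)). Qed.

Section Ideals.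
Variable R : comUnitRingType.
Implicit Types (I J T : R -> Prop) (x y z : R).

Section IdealLemmas.
Variables (I : R -> Prop) (hI : is_ideal I).

Lemma ideal0 : I 0. Proof. by case: hI. Qed.

Lemma idealD x y : I x -> I y -> I (x + y). Proof. by case: hI => _ [hD _]; apply: hD. Qed.

Lemma idealMl r x : I x -> I (r * x). Proof. by case: hI => _ [_ hM]; apply: hM. Qed.

Lemma idealMr r x : I x -> I (x * r). Proof. by rewrite mulrC; apply: idealMl. Qed.

Lemma idealB x y : I x -> I y -> I (x - y).
Proof. by move=> hx hy; rewrite -mulN1r; apply: idealD => //; apply: idealMl. Qed.

Lemma ideal_sum k (f : 'I_k -> R) : (forall i, I (f i)) -> I (\sum_(i < k) f i).
Proof. by move=> hf; apply: (big_ind I) => //; [exact: ideal0 | exact: idealD]. Qed.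

End IdealLemmas.

Definition ideal_add I J z := exists i j, [/\ I i, J j & z = i + j].

Definition ideal_scale I x z := exists2 a, I a & z = a * x.

Definition principal x := ideal_scale (fun _ => True) x.

Lemma ideal_add_ideal I J : is_ideal I -> is_ideal J -> is_ideal (ideal_add I J).
Proof.
move=> hI hJ; split; first by exists 0, 0; split; [exact: ideal0 | exact: ideal0 | rewrite addr0].
split.
- move=> _ _ [i1 [j1 [h1 k1 ->]]] [i2 [j2 [h2 k2 ->]]].
  by exists (i1 + i2), (j1 + j2); split; [exact: idealD | exact: idealD | rewrite addrACA].
- move=> r _ [i [j [hi hj ->]]].
  by exists (r * i), (r * j); split; [exact: idealMl | exact: idealMl | rewrite mulrDr].
Qed.

Lemma ideal_addl I J z : is_ideal J -> I z -> ideal_add I J z.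
Proof. by move=> hJ hz; exists z, 0; split; [| exact: ideal0 | rewrite addr0]. Qed.

Lemma ideal_addr I J z : is_ideal I -> J z -> ideal_add I J z.
Proof. by move=> hI hz; exists 0, z; split; [exact: ideal0 | | rewrite add0r]. Qed.

Lemma ideal_scale_ideal I x : is_ideal I -> is_ideal (ideal_scale I x).
Proof.
move=> hI; split; first by exists 0; [exact: ideal0 | rewrite mul0r].
split.
- by move=> _ _ [a ha ->] [b hb ->]; exists (a + b); [exact: idealD | rewrite mulrDl].
- by move=> r _ [a ha ->]; exists (r * a); [exact: idealMl | rewrite mulrA].
Qed.

Lemma principal_ideal x : is_ideal (principal x).
Proof. by apply: ideal_scale_ideal; split=> //; split. Qed.

Lemma principal_gen x : principal x x.
Proof. by exists 1; rewrite ?mul1r. Qed.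

Fixpoint ipow T n : R -> Prop :=
  match n with
  | 0 => fun _ => True
  | n'.+1 => fun x => exists k (a b : 'I_k -> R),
       (forall i, T (a i)) /\ (forall i, ipow T n' (b i)) /\ x = \sum_(i < k) a i * b i
  end.

Lemma mpow_ipow n x : mpow n x <-> ipow (@mx R) n x.
Proof.
elim: n x => [//|n IH] x /=.
by split=> -[k [a [b [ha [hb ->]]]]]; exists k, a, b; split=> //; split=> // i; apply/IH.
Qed.

Lemma ipow_ideal T n : is_ideal (ipow T n).
Proof.
elim: n => [|n IH] //=.
split.
  by exists 0%N, (fun _ => 0), (fun _ => 0); rewrite big_ord0; split; [case | split; [case |]].
split.
- move=> _ _ [k1 [a1 [b1 [ha1 [hb1 ->]]]]] [k2 [a2 [b2 [ha2 [hb2 ->]]]]].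
  exists (k1 + k2)%N, (catf a1 a2), (catf b1 b2); split; first exact: catfP.
  split; first exact: catfP.
  rewrite big_split_ord; congr (_ + _); apply: eq_bigr => i _.
  + by rewrite !catf_lshift.
  + by rewrite !catf_rshift.
- move=> r _ [k [a [b [ha [hb ->]]]]]; exists k, a, (fun i => r * b i).
  split=> //; split; first by move=> i; apply: (idealMl IH).
  by rewrite mulr_sumr; apply: eq_bigr => i _; rewrite mulrCA.
Qed.

Lemma ipow_mul T n a b : T a -> ipow T n b -> ipow T n.+1 (a * b).
Proof.
by move=> ha hb; exists 1%N, (fun _ => a), (fun _ => b); rewrite big_ord1.
Qed.

Lemma ipowS T n x : ipow T n.+1 x -> ipow T n x.
Proof.
elim: n x => [//|n IH] x [k [a [b [ha [hb ->]]]]].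
by exists k, a, b; split=> //; split=> // i; apply: IH.
Qed.

Lemma ipow_le T m n x : (m <= n)%N -> ipow T n x -> ipow T m x.
Proof.
move=> /subnK <-; elim: (n - m)%N x => [|d IH] x; first by rewrite add0n.
by rewrite addSn => /ipowS; apply: IH.
Qed.

Lemma ipow_subset T T' n x : (forall z, T z -> T' z) -> ipow T n x -> ipow T' n x.
Proof.
move=> hT; elim: n x => [//|n IH] x [k [a [b [ha [hb ->]]]]].
by exists k, a, b; split; [move=> i; exact: hT | split=> // i; exact: IH (hb i)].
Qed.

Lemma ipow_add_principal T g n p q x : (p + q <= n)%N ->
  ipow (ideal_add T (principal g)) n x -> ideal_add (ipow T p) (principal (g ^+ q)) x.
Proof.
elim: n p q x => [|n IH] [|p] [|q] x // hpq hx;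
  try by [apply: ideal_addl (principal_ideal _) _
         | apply: ideal_addr (ipow_ideal T _) _; exists x; rewrite ?expr0 ?mulr1].
move: hpq hx; rewrite addSn ltnS => hpq [k [a [b [ha [hb ->]]]]].
apply: (ideal_sum (ideal_add_ideal (ipow_ideal T _) (principal_ideal _))) => i.
have [t [_ [ht [c _ ->] ->]]] := ha i.
have [t1 [_ [ht1 [z1 _ ->] e1]]] := IH p q.+1 (b i) hpq (hb i).
have hpq' : (p.+1 + q <= n)%N by rewrite addSnnS.
have [t2 [_ [ht2 [z2 _ ->] e2]]] := IH p.+1 q (b i) hpq' (hb i).
exists (t * t1 + c * g * t2), ((t * z1 + c * z2) * g ^+ q.+1); split.
- exact: (idealD (ipow_ideal T p.+1) (ipow_mul ht ht1) (idealMl (ipow_ideal T p.+1) _ ht2)).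
- by exists (t * z1 + c * z2).
- by rewrite mulrDl {1}e1 e2 exprS; ring.
Qed.

Definition span (gs : seq R) z :=
  exists c : 'I_(size gs) -> R, z = \sum_(i < size gs) c i * gs`_i.

Lemma span_nth gs (i : 'I_(size gs)) : span gs gs`_i.
Proof.
exists (fun j => (j == i)%:R).
rewrite (bigD1 i) //= eqxx mul1r big1 ?addr0 // => j /negbTE ->; by rewrite mul0r.
Qed.

Lemma span_sub I gs : is_ideal I -> (forall i : 'I_(size gs), I gs`_i) ->
  forall z, span gs z -> I z.
Proof. by move=> hI hgs _ [c ->]; apply: (ideal_sum hI) => i; exact: idealMl. Qed.

Lemma span_cons g gs z : span (g :: gs) z -> ideal_add (span gs) (principal g) z.
Proof.
move=> [c ->]; rewrite big_ord_recl /= addrC.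
exists (\sum_(i < size gs) c (lift ord0 i) * gs`_i), (c ord0 * g); split=> //.
- by exists (fun i => c (lift ord0 i)).
- by exists (c ord0).
Qed.

Lemma span_mem gs (g : R) : g \in gs -> span gs g.
Proof.
move=> hg; have hi : (index g gs < size gs)%N by rewrite index_mem.
by rewrite -(nth_index 0 hg); apply: (span_nth (Ordinal hi)).
Qed.

Lemma ipow_span_sub Q gs : is_ideal Q -> (forall g, g \in gs -> exists k, Q (g ^+ k)) ->
  exists p, forall x, ipow (span gs) p x -> Q x.
Proof.
move=> hQ; elim: gs => [|g gs IH] hgs.
  exists 1%N => _ [k [a [b [ha [_ ->]]]]]; apply: (ideal_sum hQ) => i.
  by have [c ->] := ha i; rewrite big_ord0 mul0r; apply: ideal0.
have [p hp] : exists p, forall x, ipow (span gs) p x -> Q x.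
  by apply: IH => h hh; apply: hgs; rewrite inE hh orbT.
have [k hk] := hgs g (mem_head g gs).
exists (p + k)%N => x /(ipow_subset (@span_cons g gs)).
move=> /(ipow_add_principal (leqnn _)) [t [_ [ht [c _ ->] ->]]].
by apply: idealD hQ _ _ (hp _ ht) (idealMl hQ _ hk).
Qed.

End Ideals.

Section NoetherianLocal.
Variable R : comUnitRingType.
Hypothesis hnoeth : noetherian R.
Implicit Types (I Q : R -> Prop) (x y z : R).

Lemma noetherian_chain_stable (Q : nat -> R -> Prop) :
  (forall n, is_ideal (Q n)) -> (forall n z, Q n z -> Q n.+1 z) ->
  exists N, forall n z, Q n z -> Q N z.
Proof.
move=> hQ hQS.
have hQle m n z : (m <= n)%N -> Q m z -> Q n z.
  by move=> /subnK <-; elim: (n - m)%N => [|d IH] h; [rewrite add0n | apply: hQS; apply: IH].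
pose U z := exists n, Q n z.
have hU : is_ideal U.
  split; first by exists 0%N; apply: ideal0.
  split.
  - move=> y z [m hy] [n hz]; exists (maxn m n).
    by apply: idealD; [| apply: hQle hy | apply: hQle hz]; rewrite ?leq_maxl ?leq_maxr.
  - by move=> r y [n hy]; exists n; apply: idealMl.
have [gs hgs] := hnoeth hU.
have /fin_all_exists [n hn] (i : 'I_(size gs)) : exists n, Q n gs`_i.
  by apply/hgs; apply: span_nth.
exists (\max_(i < size gs) n i)%N => m z hz.
have hz' : span gs z by apply/hgs; exists m.
apply: (span_sub (hQ _) _ hz') => i.
by apply: hQle (hn i); apply: leq_bigmax.
Qed.

Definition maximal_in (F : (R -> Prop) -> Prop) Q :=
  F Q /\ forall Q', F Q' -> (forall z, Q z -> Q' z) -> forall z, Q' z -> Q z.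

Lemma noetherian_maximal (F : (R -> Prop) -> Prop) :
  (forall Q, F Q -> is_ideal Q) -> (exists Q, F Q) -> exists Q, maximal_in F Q.
Proof.
move=> hF [Q0 hQ0]; apply: contrapT => hmax.
have step (Q : {Q | F Q}) : exists Q' : {Q | F Q},
    (forall z, sval Q z -> sval Q' z) /\ exists z, sval Q' z /\ ~ sval Q z.
  case: Q => Q hQ; apply: contrapT => hno; apply: hmax; exists Q; split=> // Q' hQ' hsub z hz.
  by apply: contrapT => hnz; apply: hno; exists (exist _ Q' hQ'); split=> //; exists z.
have [next hnext] := choice step.
pose ch n := iter n next (exist _ Q0 hQ0).
have [N hN] := @noetherian_chain_stable (fun n => sval (ch n))
  (fun n => hF _ (svalP (ch n))) (fun n => proj1 (hnext (ch n))).
by have [_ [z [hz hnz]]] := hnext (ch N); apply/hnz/(hN N.+1).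
Qed.

Hypothesis hloc : local_ring R.

Lemma mx_ideal : is_ideal (@mx R).
Proof.
split; first by rewrite /mx unitr0.
split; first exact: hloc.
by move=> r x; rewrite /mx unitrM => /negbTE ->; rewrite andbF.
Qed.

Lemma unit_1Bmx (a : R) : mx a -> (1 - a) \is a GRing.unit.
Proof.
move=> ha; case: (boolP ((1 - a) \is a GRing.unit)) => // h.
by have := hloc h ha; rewrite subrK /mx unitr1.
Qed.

Lemma mpow_ideal n : is_ideal (@mpow R n).
Proof.
have [h0 [hD hM]] := ipow_ideal (@mx R) n.
split; first exact/mpow_ipow.
split; first by move=> x y /mpow_ipow hx /mpow_ipow hy; apply/mpow_ipow; apply: hD.
by move=> r x /mpow_ipow hx; apply/mpow_ipow; apply: hM.
Qed.

Lemma mpow_le m n x : (m <= n)%N -> mpow n x -> mpow m x.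
Proof. by move=> hmn /mpow_ipow hx; apply/mpow_ipow; apply: ipow_le hx. Qed.

Lemma mpow_mul n (a b : R) : mx a -> mpow n b -> mpow n.+1 (a * b).
Proof. by move=> ha /mpow_ipow hb; apply/mpow_ipow; apply: ipow_mul. Qed.

Lemma mpow_sub Q : is_ideal Q -> (forall a, mx a -> exists k, Q (a ^+ k)) ->
  exists p, forall x, mpow p x -> Q x.
Proof.
move=> hQ hpow; have [gs hgs] := hnoeth mx_ideal.
have [p hp] := ipow_span_sub hQ (fun g hg => hpow g (proj2 (hgs g) (span_mem hg))).
by exists p => x /mpow_ipow /(ipow_subset (fun z => proj1 (hgs z))); apply: hp.
Qed.

End NoetherianLocal.

Section Krull.
Variable R : comUnitRingType.
Hypothesis hnoeth : noetherian R.
Implicit Types (I J N Q : R -> Prop) (x y z : R).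

Lemma colon_pow_stable Q (a : R) : is_ideal Q ->
  exists K, forall z, Q (a ^+ K.+1 * z) -> Q (a ^+ K * z).
Proof.
move=> hQ.
have hC k : is_ideal (fun z => Q (a ^+ k * z)).
  split; first by rewrite mulr0; apply: ideal0.
  split; first by move=> y z hy hz; rewrite mulrDr; apply: idealD.
  by move=> r y hy; rewrite mulrCA; apply: idealMl.
have hCS k z : Q (a ^+ k * z) -> Q (a ^+ k.+1 * z).
  by move=> hz; rewrite exprS -mulrA; apply: idealMl.
have [K hK] := noetherian_chain_stable hnoeth hC hCS.
by exists K => z /(hK K.+1).
Qed.

Definition avoids J N Q :=
  [/\ is_ideal Q, forall z, J z -> Q z & forall y, Q y -> N y -> J y].

Lemma maximal_avoids_pow J N Q (a : R) : maximal_in (avoids J N) Q ->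
  (forall y, N y -> J (a * y)) -> exists k, Q (a ^+ k).
Proof.
move=> [[hQ hJQ hQN] hmax] haN.
have [K hK] := colon_pow_stable a hQ.
pose Q' := ideal_add Q (principal (a ^+ K)).
have hQQ' z : Q z -> Q' z by apply: ideal_addl (principal_ideal _).
exists K; apply: (hmax Q') (hQQ') _ (ideal_addr hQ (principal_gen _)).
split=> [||_ [q [_ [hq [w _ ->] ->]]] hy].
- exact: ideal_add_ideal hQ (principal_ideal _).
- by move=> z /hJQ /hQQ'.
- apply: (hQN _ _ hy); apply: (idealD hQ hq); rewrite mulrC; apply: hK.
  have -> : a ^+ K.+1 * w = a * (q + w * a ^+ K) - a * q by rewrite exprS; ring.
  exact: (idealB hQ (hJQ _ (haN _ hy)) (idealMl hQ a hq)).
Qed.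

Hypothesis hloc : local_ring R.

(* The maximal [Q] avoiding [N = I + Rx] outside [J = I + mx] contains a power
   of [m], hence [x]; so [x] lies in [I + mx], i.e. [(1 - b) x] lies in [I]
   for some [b] in [m]. *)
Theorem krull_intersection I x : is_ideal I ->
  (forall n, ideal_add I (mpow n) x) -> I x.
Proof.
move=> hI hx.
pose J := ideal_add I (ideal_scale (@mx R) x).
pose N := ideal_add I (principal x).
have hJ : is_ideal J := ideal_add_ideal hI (ideal_scale_ideal x (mx_ideal hloc)).
have [Q hQ] : exists Q, maximal_in (avoids J N) Q.
  by apply: (noetherian_maximal hnoeth) => [Q [] //|]; exists J; split.
have hpow a : mx a -> exists k, Q (a ^+ k).
  move=> ha; apply: maximal_avoids_pow hQ _ => _ [i [_ [hi [t _ ->] ->]]].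
  exists (a * i), (a * t * x); split; first exact: idealMl.
  + by exists (a * t); first exact: (idealMr (mx_ideal hloc) t ha).
  + by rewrite mulrDr mulrA.
case: hQ => [[hQ hJQ hQN] _].
have [p hp] := mpow_sub hnoeth hloc hQ hpow.
have [i [_ [hi [b hb ->] ex]]] : J x.
  apply: hQN; last exact: ideal_addr hI (principal_gen x).
  have [i [b [hi hb ->]]] := hx p.
  exact: (idealD hQ (hJQ _ (ideal_addl (ideal_scale_ideal x (mx_ideal hloc)) hi)) (hp _ hb)).
have -> : x = (1 - b)^-1 * i.
  apply: (canRL (mulKr (unit_1Bmx hloc hb))).
  by rewrite mulrBl mul1r {1}ex addrK.
exact: idealMl.
Qed.

Corollary krull_intersection0 (c : R) : (forall n, mpow n c) -> c = 0.
Proof.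
move=> hc; have [r _ ->] : principal 0 c.
  by apply: krull_intersection (principal_ideal 0) _ => n; apply: ideal_addr (principal_ideal 0) _.
by rewrite mulr0.
Qed.

End Krull.

Section SubmoduleType.
Variables (R : comUnitRingType) (M : lmodType R) (P : M -> Prop).

(* Membership is guarded by [is_submodule P], which makes the carrier closed
   under the module operations without any hypothesis on [P]. *)
Definition submod_mem : pred M := fun x => `[< is_submodule P -> P x >].

Record submod := Submod { submod_val : M; submod_valP : submod_mem submod_val }.
HB.instance Definition _ := [isSub for submod_val].
HB.instance Definition _ := [Choice of submod by <:].

Lemma submod_mem_closed : subsemimod_closed submod_mem.
Proof.
split; [split|].
- by apply/asboolP => -[].
- move=> u v /asboolP hu /asboolP hv; apply/asboolP => hP; case: (hP) => _ hc.
  by have := hc 1 u v (hu hP) (hv hP); rewrite scale1r.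
- move=> a u /asboolP hu; apply/asboolP => hP; case: (hP) => h0 hc.
  by have := hc a u 0 (hu hP) h0; rewrite addr0.
Qed.

HB.instance Definition _ :=
  GRing.SubChoice_isSubLmodule.Build R M submod_mem submod submod_mem_closed.

Lemma submod_val_linear : linear submod_val.
Proof. by []. Qed.

Lemma submod_mem_in (hP : is_submodule P) (y : submod) : P (submod_val y).
Proof. exact: (asboolW (submod_valP y) hP). Qed.

Lemma submod_memI x : P x -> submod_mem x.
Proof. by move=> hx; apply/asboolP. Qed.

End SubmoduleType.

Definition mk_linear (R : comUnitRingType) (A B : lmodType R) (f : A -> B) (hf : linear f)
  : {linear A -> B} := HB.pack f (GRing.isLinear.Build R A B _ f hf).

Lemma injective_factor (R : comUnitRingType) (E : lmodType R) (A M : lmodType R)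
    (phi : A -> M) (psi : A -> E) (D : A -> Prop) :
  injective_module E -> linear phi -> linear psi -> is_submodule D ->
  (forall a, D a -> phi a = 0 -> psi a = 0) ->
  exists g : {linear M -> E}, forall a, D a -> g (phi a) = psi a.
Proof.
move=> hE hphi hpsi [hD0 hDl] hker.
have phi0 : phi 0 = 0 := raddf0 (mk_linear hphi).
have phiB : {morph phi : a a' / a - a'} := raddfB (mk_linear hphi).
have psiB : {morph psi : a a' / a - a'} := raddfB (mk_linear hpsi).
have hDB a a' : D a -> D a' -> D (a - a').
  by move=> ha ha'; rewrite -scaleN1r addrC; apply: hDl.
pose P m := exists2 a, D a & m = phi a.
have hP : is_submodule P.
  split; first by exists 0; rewrite ?phi0.
  move=> r _ _ [a1 h1 ->] [a2 h2 ->]; exists (r *: a1 + a2); first exact: hDl.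
  by rewrite hphi.
have psi_wd a a' : D a -> D a' -> phi a = phi a' -> psi a = psi a'.
  move=> ha ha' e; apply/eqP; rewrite -subr_eq0 -psiB hker //; first exact: hDB.
  by rewrite phiB e subrr.
have hpre (y : submod P) : exists a, D a /\ submod_val y = phi a.
  by have [a ha e] := submod_mem_in hP y; exists a.
have [pick hpick] := choice hpre.
pose f (y : submod P) := psi (pick y).
have hf : linear f.
  move=> r y1 y2; rewrite /f -hpsi.
  have [hD1 e1] := hpick y1; have [hD2 e2] := hpick y2.
  have [hD3 e3] := hpick (r *: y1 + y2).
  apply: psi_wd; [done | exact: hDl | by rewrite -e3 hphi -e1 -e2].
have [g hg] := hE _ _ (mk_linear (@submod_val_linear _ _ P)) (mk_linear hf) val_inj.
exists g => a ha.
have hPa : P (phi a) by exists a.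
have := hg (Submod (submod_memI hPa)); rewrite /= /f => ->.
by have [hD' e'] := hpick (Submod (submod_memI hPa)); apply: psi_wd.
Qed.

Section InjectiveHull.
Variables (R : comUnitRingType) (E : lmodType R) (e0 : E).
Hypothesis hE : injective_hull_of_residue e0.

Lemma e0_neq0 : e0 != 0. Proof. by case: hE. Qed.

Lemma scale_mx_e0 (a : R) : mx a -> a *: e0 = 0. Proof. by case: hE => _ h _ _; apply: h. Qed.

Lemma hull_injective : injective_module E. Proof. by case: hE. Qed.

Lemma socle_e0 (w : E) : (forall a, mx a -> a *: w = 0) -> exists t, w = t *: e0.
Proof.
move=> hw; have [->|wn0] := eqVneq w 0; first by exists 0; rewrite scale0r.
pose P (v : E) := exists t, v = t *: w.
have hP : is_submodule P.
  split; first by exists 0; rewrite scale0r.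
  by move=> r _ _ [t1 ->] [t2 ->]; exists (r * t1 + t2); rewrite scalerDl scalerA.
have [_ _ hess _] := hE.
have hPw : exists u, P u /\ u <> 0 by exists w; split; [exists 1; rewrite scale1r | exact/eqP].
have [_ [[t ->] vn0 [c ec]]] := hess P hP hPw.
have [tu|/hw tw0] := boolP (t \is a GRing.unit); last by case: (vn0 tw0).
by exists (t^-1 * c); rewrite -scalerA -ec scalerA mulVr // scale1r.
Qed.

Lemma hull_cogenerator (M : lmodType R) (w : M) : w != 0 ->
  exists pi : {linear M -> E}, pi w = e0.
Proof.
move=> wn0.
have hphi : linear (fun t : R^o => t *: w) by move=> a t1 t2; rewrite scalerDl scalerA.
have hpsi : linear (fun t : R^o => t *: e0) by move=> a t1 t2; rewrite scalerDl scalerA.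
have hD : is_submodule (fun _ : R^o => True) by [].
have hker t : True -> t *: w = 0 -> t *: e0 = 0.
  move=> _ htw; have [tu|/scale_mx_e0 //] := boolP (t \is a GRing.unit).
  by move: wn0; rewrite -[w]scale1r -(mulVr tu) -scalerA htw scaler0 eqxx.
have [pi hpi] := injective_factor hull_injective hphi hpsi hD hker.
by exists pi; have := hpi 1 I; rewrite !scale1r.
Qed.

Lemma hull_separates (K : R -> Prop) (x : R) : is_ideal K -> ~ K x ->
  exists u : E, (forall a, K a -> a *: u = 0) /\ x *: u = e0.
Proof.
move=> hK hx.
have hphi : linear (fun p : R^o * R^o => p.1 * x + p.2 : R^o).
  by move=> a p q /=; rewrite mulrDl -mulrA addrACA -mulrDr.
have hpsi : linear (fun p : R^o * R^o => p.1 *: e0) by move=> a p q /=; rewrite scalerDl scalerA.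
have hD : is_submodule (fun p : R^o * R^o => K p.2).
  by split=> [|r p q hp hq /=]; [exact: ideal0 | apply: idealD hK _ _ (idealMl hK r hp) hq].
have hker (p : R^o * R^o) : K p.2 -> p.1 * x + p.2 = 0 -> p.1 *: e0 = 0.
  move=> hp hpx; have [tu|/scale_mx_e0 //] := boolP (p.1 \is a GRing.unit).
  case: hx; rewrite (canRL (mulKr tu) (_ : p.1 * x = - p.2)).
    by rewrite mulrN -mulNr; apply: idealMl.
  by apply/eqP; rewrite -addr_eq0 hpx.
have [g hg] := injective_factor hull_injective hphi hpsi hD hker.
have g_scale (p : R^o * R^o) : (p.1 * x + p.2) *: g 1 = g (p.1 * x + p.2).
  by rewrite -linearZ /= [_ *: _]mulr1.
exists (g 1); split.
- move=> a ha; have := g_scale (0, a).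
  by rewrite (hg (0, a)) //= mul0r add0r scale0r.
- have := g_scale (1, 0).
  by rewrite (hg (1, 0)) /= ?mul1r ?addr0 ?scale1r //; apply: ideal0.
Qed.

End InjectiveHull.

Section Endomorphisms.
Variable R : comUnitRingType.
Hypotheses (hnoeth : noetherian R) (hloc : local_ring R) (hcompl : madic_complete R).
Variables (E : lmodType R) (e0 : E).
Hypothesis hE : injective_hull_of_residue e0.

Definition mtorsion n (v : E) := forall a, mpow n a -> a *: v = 0.

Lemma mtorsion_submodule n : is_submodule (mtorsion n).
Proof.
split; first by move=> a _; rewrite scaler0.
move=> r u v hu hv a ha.
by rewrite scalerDr scalerA mulrC -scalerA hu // hv // scaler0 addr0.
Qed.

Lemma mtorsion_le m n v : (m <= n)%N -> mtorsion m v -> mtorsion n v.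
Proof. by move=> hmn hv a ha; apply: hv; apply: mpow_le ha. Qed.

Lemma mtorsion0 v : mtorsion 0 v -> v = 0.
Proof. by move=> hv; rewrite -[v]scale1r; apply: hv. Qed.

Lemma ann_mtorsion n (c : R) : (forall v, mtorsion n v -> c *: v = 0) -> mpow n c.
Proof.
move=> hc; apply: contrapT => hnc.
have [u [hu hcu]] := hull_separates hE (mpow_ideal R n) hnc.
by move: (e0_neq0 hE); rewrite -hcu hc ?eqxx.
Qed.

Lemma mtorsion_faithful (c : R) : (forall n v, mtorsion n v -> c *: v = 0) -> c = 0.
Proof.
by move=> hc; apply: (krull_intersection0 hnoeth hloc) => n; apply: ann_mtorsion; apply: hc.
Qed.

(* Multiplication by the generators of [m^n] sends the [m^(n+1)]-torsion to
   the socle [R e0]; [th] factors through it, and an extension of the factor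
   to [E^d] is given on the socle of [E^d] by scalars. *)
Lemma endo_scalar_step n (th : E -> E) : linear th ->
  (forall v, mtorsion n v -> th v = 0) ->
  exists c, forall v, mtorsion n.+1 v -> th v = c *: v.
Proof.
move=> hth hth0; have [gs hgs] := hnoeth (mpow_ideal R n).
pose phi (v : E) : {ffun 'I_(size gs) -> E} := [ffun i : 'I_(size gs) => gs`_i *: v].
have hphi : linear phi.
  by move=> a u v; apply/ffunP => i; rewrite !ffunE scalerDr !scalerA mulrC.
have hker v : mtorsion n.+1 v -> phi v = 0 -> th v = 0.
  move=> _ /ffunP hv; apply: hth0 => _ /hgs [c ->]; rewrite scaler_suml big1 // => i _.
  by have := hv i; rewrite !ffunE -scalerA => ->; rewrite scaler0.
have [g hg] := injective_factor (hull_injective hE) hphi hth (mtorsion_submodule n.+1) hker.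
pose delta i (w : E) : {ffun 'I_(size gs) -> E} :=
  [ffun j : 'I_(size gs) => if j == i then w else 0].
have deltaZ i a w : delta i (a *: w) = a *: delta i w.
  by apply/ffunP => j; rewrite !ffunE; case: eqP; rewrite ?scaler0.
have /fin_all_exists [c hc] i : exists c, g (delta i e0) = c *: e0.
  apply: (socle_e0 hE) => a ha.
  rewrite -linearZ -deltaZ scale_mx_e0 //.
  have -> : delta i 0 = 0 by apply/ffunP => j; rewrite !ffunE; case: eqP.
  exact: linear0.
exists (\sum_i c i * gs`_i) => v hv.
have /fin_all_exists [t ht] (i : 'I_(size gs)) : exists t, gs`_i *: v = t *: e0.
  apply: (socle_e0 hE) => a ha; rewrite scalerA; apply: hv.
  by apply: mpow_mul => //; apply/hgs; apply: span_nth.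
have phi_delta : phi v = \sum_i delta i (t i *: e0).
  apply/ffunP => j; rewrite sum_ffunE ffunE ht (bigD1 j) //= ffunE eqxx big1 ?addr0 //.
  by move=> i /negbTE; rewrite ffunE eq_sym => ->.
rewrite -hg // phi_delta linear_sum scaler_suml; apply: eq_bigr => i _.
by rewrite deltaZ linearZ /= hc -scalerA ht !scalerA mulrC.
Qed.

Lemma endo_scalar_mtorsion n (th : E -> E) : linear th ->
  exists r, forall v, mtorsion n v -> th v = r *: v.
Proof.
move=> hth; elim: n => [|n [r hr]].
  have th0 : th 0 = 0 := raddf0 (mk_linear hth).
  by exists 0 => v /mtorsion0 ->; rewrite scaler0.
have hth' : linear (fun v => th v - r *: v).
  move=> a u v /=; rewrite hth scalerDr scalerBr opprD !scalerA addrACA.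
  by rewrite mulrC.
have hth'0 v : mtorsion n v -> th v - r *: v = 0 by move=> hv; rewrite hr // subrr.
have [c hc] := endo_scalar_step hth' hth'0.
by exists (r + c) => v hv; rewrite scalerDl -hc // addrC subrK.
Qed.

Lemma endo_scalar (th : E -> E) : linear th ->
  exists r, forall n v, mtorsion n v -> th v = r *: v.
Proof.
move=> hth; have [r hr] := choice (fun n => endo_scalar_mtorsion n hth).
have [y hy] : exists y, forall n, exists N, forall i, (N <= i)%N -> mpow n (r i - y).
  apply: hcompl => n; exists n => i j hi hj; apply: ann_mtorsion => v hv.
  by rewrite scalerBl -(hr i v (mtorsion_le hi hv)) -(hr j v (mtorsion_le hj hv)) subrr.
exists y => n v hv; have [N hN] := hy n.
rewrite (hr (maxn N n) v (mtorsion_le (leq_maxr N n) hv)).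
by apply/eqP; rewrite -subr_eq0 -scalerBl; apply/eqP/hv/hN/leq_maxl.
Qed.

Lemma bilinear_scalar (L : lmodType R) (beta : L -> E -> E) :
  (forall v, linear (beta^~ v)) -> (forall l, linear (beta l)) ->
  exists g : {linear L -> R^o}, forall l n v, mtorsion n v -> beta l v = g l *: v.
Proof.
move=> hlinl hlinr; have [g hg] := choice (fun l => endo_scalar (hlinr l)).
have glin : linear (g : L -> R^o).
  move=> a l1 l2; apply/eqP; rewrite -subr_eq0; apply/eqP; apply: mtorsion_faithful => n v hv.
  rewrite scalerBl -(hg _ n v hv) hlinl (hg l1 n v hv) (hg l2 n v hv).
  by rewrite scalerDl scalerA subrr.
by exists (mk_linear glin).
Qed.

End Endomorphisms.

Section Trace.
Variables (R : comUnitRingType) (L : lmodType R) (S : L -> Prop).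

Lemma trace_ideal : is_ideal (trace_SL S).
Proof.
split.
  exists 0%N, (fun _ => 0), (fun _ => \0), (fun _ => 0).
  by rewrite big_ord0; split=> // -[].
split.
- move=> _ _ [k1 [r1 [f1 [s1 [h1 ->]]]]] [k2 [r2 [f2 [s2 [h2 ->]]]]].
  exists (k1 + k2)%N, (catf r1 r2), (catf f1 f2), (catf s1 s2); split; first exact: catfP.
  rewrite big_split_ord; congr (_ + _); apply: eq_bigr => i _.
  + by rewrite !catf_lshift.
  + by rewrite !catf_rshift.
- move=> r _ [k [r1 [f [s [hs ->]]]]]; exists k, (fun i => r * r1 i), f, s; split=> //.
  by rewrite mulr_sumr; apply: eq_bigr => i _; rewrite mulrA.
Qed.

Lemma trace_gen (f : {linear L -> R^o}) s : S s -> trace_SL S (f s).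
Proof.
by move=> hs; exists 1%N, (fun _ => 1), (fun _ => f), (fun _ => s); rewrite big_ord1 mul1r.
Qed.

Lemma trace_ann_zero_cl (N : lmodType R) x :
  trace_SL S x -> annihilator (zero_cl S (N:=N)) x.
Proof.
move=> [k [r [f [s [hs ->]]]]] u hu; rewrite scaler_suml big1 // => i _.
have hb : bilinear_map (fun (l : L) (v : N) => (f i l : R) *: v).
  split=> [a l1 l2 v | a l v1 v2]; first by rewrite linearP scalerDl scalerA.
  by rewrite scalerDr !scalerA mulrC.
by rewrite -scalerA (hu _ (hs i) _ _ hb) scaler0.
Qed.

Hypotheses (hnoeth : noetherian R) (hloc : local_ring R) (hcompl : madic_complete R).
Variables (E : lmodType R) (e0 : E).
Hypothesis hE : injective_hull_of_residue e0.

Lemma zero_cl_of_ann_trace n (u : E) : mtorsion n u ->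
  (forall t, trace_SL S t -> t *: u = 0) -> zero_cl S u.
Proof.
move=> hu htr s hs M b [hbl hbr]; apply: contrapT => /eqP hbsu.
have [pi hpi] := hull_cogenerator hE hbsu.
have hlinl v : linear (fun l => pi (b l v)) by move=> a l1 l2; rewrite hbl linearP.
have hlinr l : linear (fun v => pi (b l v)) by move=> a v1 v2; rewrite hbr linearP.
have [g hg] := bilinear_scalar hnoeth hloc hcompl hE hlinl hlinr.
move: (e0_neq0 hE); rewrite -hpi (hg s n u hu) htr ?scale0r ?eqxx //.
exact: trace_gen.
Qed.

End Trace.

Theorem theorem7p19 (R : comUnitRingType)
  (hnoeth : noetherian R) (hloc : local_ring R) (hcompl : madic_complete R)
  (E : lmodType R) (e0 : E) (hE : injective_hull_of_residue e0)
  (L : lmodType R) (S : L -> Prop) :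
  forall x : R, trace_SL S x <-> annihilator (zero_cl S (N:=E)) x.
Proof.
move=> x; split; first exact: trace_ann_zero_cl.
move=> hx; apply: contrapT => hnx.
have [n hn] : exists n, ~ ideal_add (trace_SL S) (mpow n) x.
  by apply/existsNP => hall; apply/hnx/(krull_intersection hnoeth hloc (trace_ideal S) hall).
have [u [hKu hxu]] := hull_separates hE (ideal_add_ideal (trace_ideal S) (mpow_ideal R n)) hn.
have hu : mtorsion n u by move=> a ha; apply/hKu/(ideal_addr (trace_ideal S) ha).
have htr t : trace_SL S t -> t *: u = 0.
  by move=> ht; apply/hKu/(ideal_addl (mpow_ideal R n) ht).
move: (e0_neq0 hE); rewrite -hxu hx ?eqxx //.
exact: (zero_cl_of_ann_trace hnoeth hloc hcompl hE hu htr).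
Qed.
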